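(* Assume Assumptions 1 and 2 for some $\delta>0$. For distinct $u_1,u_2\in L$, let $N_{u_1u_2}$ be the number of common neighbors of $u_1$ and $u_2$ in the bipartite graph $G_b$. Then, as $n_R\to\infty$, $$\Pr[N_{u_1u_2}\ge 2\mid S_L,S_R,(u_1,u_2)\in E]=O(p_{u_1u_2}),$$ where $p_{u_1u_2}=\frac{M_{R2}}{M_{R1}^2}\cdot\frac{w_{u_1}w_{u_2}}{n_R}$.
   Context: Model: left nodes $L$ ($|L|=n_L$), right nodes $R$ ($|R|=n_R$), weight sequences $S_L=(w_u)_{u\in L}$, $S_R=(w_v)_{v\in R}$ of positive reals; $M_{Lk}=\frac1{n_L}\sum_{u\in L}w_u^k$, $M_{Rk}=\frac1{n_R}\sum_{v\in R}w_v^k$. The random bipartite graph $G_b=(L\sqcup R,E_b)$ contains each edge $(u,v)$, $u\in L$, $v\in R$, independently with probability $\min\left(\frac{w_uw_v}{n_RM_{R1}},1\right)$. The projected graph is $G=(L,E)$ with $(u,u')\in E$ for distinct $u,u'\in L$ iff there is $z\in R$ with $(u,z),(u',z)\in E_b$. Assumption 1: $\frac{w_uw_v}{n_RM_{R1}}\le1$ for all $u\in L,v\in R$. Assumption 2 (parameter $\delta>0$), as $n_L,n_R\to\infty$: $\max(S_L\cup S_R)=O(n_R^{1/2-\delta})$, $\min S_L=\Omega(1)$, $M_{R2}=O(M_{R1}^2)$, $M_{R4}=O(n_R^{1-2\delta})$. *)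

From HB Require Import structures.
From mathcomp Require Import all_boot all_order all_algebra.
From mathcomp Require Import reals exp.
Set Implicit Arguments. Unset Strict Implicit. Unset Printing Implicit Defensive.
Import Order.TTheory GRing.Theory Num.Theory.
Local Open Scope ring_scope.

Section Model.
Variable R : realType.
Variables (nL nR : nat).
Variables (wL : 'I_nL -> R) (wR : 'I_nR -> R).

Definition momL (k : nat) : R := (\sum_(u < nL) wL u ^+ k) / nL%:R.
Definition momR (k : nat) : R := (\sum_(v < nR) wR v ^+ k) / nR%:R.

Definition edge_prob (u : 'I_nL) (v : 'I_nR) : R :=
  Num.min (wL u * wR v / (nR%:R * momR 1)) 1.

Definition outcome := {set 'I_nL * 'I_nR}.

Definition outcome_prob (Eb : outcome) : R :=
  \prod_(e : 'I_nL * 'I_nR)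
     (if e \in Eb then edge_prob e.1 e.2 else 1 - edge_prob e.1 e.2).

Definition Pr (A : pred outcome) : R := \sum_(Eb : outcome | A Eb) outcome_prob Eb.

Definition condPr (A B : pred outcome) : R :=
  Pr [pred Eb | A Eb && B Eb] / Pr B.

Definition common_nb (Eb : outcome) (u1 u2 : 'I_nL) : nat :=
  #|[set z : 'I_nR | ((u1, z) \in Eb) && ((u2, z) \in Eb)]|.

Definition proj_edge (Eb : outcome) (u1 u2 : 'I_nL) : bool :=
  (u1 != u2) && [exists z : 'I_nR, ((u1, z) \in Eb) && ((u2, z) \in Eb)].

End Model.

(* Conditioned on the weights, G_b is a family of independent
   coins, one per pair (u, z), with success probability q(u,z) = edge_prob.
   If u1, u2 have at least two common neighbours, then for some z both
   (u1,z), (u2,z) are edges AND some other z' != z is a common neighbour.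
   The last event does not involve the coins (u1,z), (u2,z), so by
   independence it factorises:
     Pr[N >= 2, (u1,u2) in E] <= sum_z q(u1,z) q(u2,z) Pr[(u1,u2) in E].
   Bounding q(u,z) by w_u w_z / (n_R M_R1) gives
     sum_z q(u1,z) q(u2,z) <= (M_R2 / M_R1^2) (w_u1 w_u2 / n_R) = p_{u1u2},
   hence the conditional probability is at most p_{u1u2}: the theorem holds
   with constant 1 for every instance. *)
From HB Require Import structures.
From mathcomp Require Import all_boot all_order all_algebra.
From mathcomp Require Import reals exp.
From mathcomp Require Import ring.
Import Order.TTheory GRing.Theory Num.Theory.
Local Open Scope ring_scope.
Set Implicit Arguments. Unset Strict Implicit. Unset Printing Implicit Defensive.

Section IndependentCoins.
Variable R : realType.
Variable T : finType.
(* One independent coin per element of T; the outcome is the set of successes. *)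
Variable q : T -> R.
Hypothesis q_ge0 : forall e, 0 <= q e.
Hypothesis q_le1 : forall e, q e <= 1.

Definition coin_factor (E : {set T}) (e : T) : R :=
  if e \in E then q e else 1 - q e.

Definition coin_weight (E : {set T}) : R := \prod_e coin_factor E e.

Definition prob (A : pred {set T}) : R := \sum_(E | A E) coin_weight E.

Definition coin_weight_off (e0 : T) (E : {set T}) : R :=
  \prod_(e | e != e0) coin_factor E e.

Lemma coin_factor_ge0 E e : 0 <= coin_factor E e.
Proof. by rewrite /coin_factor; case: ifP => _; rewrite ?subr_ge0. Qed.

Lemma coin_weight_ge0 E : 0 <= coin_weight E.
Proof. by apply: prodr_ge0 => e _; exact: coin_factor_ge0. Qed.

Lemma prob_ge0 A : 0 <= prob A.
Proof. by apply: sumr_ge0 => E _; exact: coin_weight_ge0. Qed.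

Lemma eq_prob (A B : pred {set T}) : A =1 B -> prob A = prob B.
Proof. by move=> eqAB; apply: eq_bigl. Qed.

Lemma prob_mono (A B : pred {set T}) : (forall E, A E -> B E) -> prob A <= prob B.
Proof.
move=> AB; rewrite /prob [X in _ <= X](bigID A) /=.
have -> : \sum_(E | B E && A E) coin_weight E = prob A.
  by apply: eq_bigl => E; case AE: (A E); rewrite ?andbF ?(AB _ AE).
by rewrite lerDl; apply: sumr_ge0 => E _; exact: coin_weight_ge0.
Qed.

Lemma prob_union_bound (I : finType) (A : pred {set T}) (Az : I -> pred {set T}) :
  (forall E, A E -> exists z, Az z E) -> prob A <= \sum_z prob (Az z).
Proof.
move=> cover; rewrite /prob big_mkcond /=.
under [X in _ <= X]eq_bigr do rewrite big_mkcond.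
rewrite exchange_big /=; apply: ler_sum => E _.
have term_ge0 z : 0 <= (if Az z E then coin_weight E else 0).
  by case: ifP => _ //; exact: coin_weight_ge0.
case AE: (A E); last by apply: sumr_ge0 => z _.
have [z AzE] := cover E AE.
by rewrite (bigD1 z) //= AzE lerDl; apply: sumr_ge0.
Qed.

Lemma coin_weight_split e0 E : coin_weight E = coin_factor E e0 * coin_weight_off e0 E.
Proof. by rewrite /coin_weight (bigD1 e0). Qed.

Lemma coin_weight_off_setU1 e0 E : coin_weight_off e0 (e0 |: E) = coin_weight_off e0 E.
Proof. by apply: eq_bigr => e ne; rewrite /coin_factor in_setU1 (negbTE ne). Qed.

Lemma prob_coin_indep (e0 : T) (D : pred {set T}) :
  (forall E, D (E :\ e0) = D E) ->
  prob [pred E : {set T} | (e0 \in E) && D E] = q e0 * prob D.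
Proof.
move=> D_indep.
set S := \sum_(E : {set T} | (e0 \notin E) && D E) coin_weight_off e0 E.
have with_e0 : prob [pred E : {set T} | (e0 \in E) && D E] = q e0 * S.
  rewrite /prob (reindex_onto (fun E : {set T} => e0 |: E) (fun E : {set T} => E :\ e0)) /=; last first.
    by move=> E /andP[e0E _]; exact: setD1K.
  rewrite /S mulr_sumr; apply: eq_big => E.
    case: (boolP (e0 \in E)) => e0E /=.
      suff -> : ((e0 |: E) :\ e0 == E) = false by rewrite andbF.
      by apply/negbTE/eqP => h; move: e0E; rewrite -h setD11.
    by rewrite setU11 -(D_indep (e0 |: E)) (setU1K e0E) eqxx andbT.
  by move=> /andP[_ _]; rewrite (coin_weight_split e0) /coin_factor setU11 coin_weight_off_setU1.
have without_e0 : prob [pred E : {set T} | (e0 \notin E) && D E] = (1 - q e0) * S.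
  rewrite /prob /S mulr_sumr; apply: eq_bigr => E /andP[e0E _].
  by rewrite (coin_weight_split e0) /coin_factor (negbTE e0E).
have split_e0 : prob D = prob [pred E : {set T} | (e0 \in E) && D E]
                         + prob [pred E : {set T} | (e0 \notin E) && D E].
  rewrite {1}/prob (bigID (fun E : {set T} => e0 \in E)) /=.
  by congr (_ + _); apply: eq_bigl => E; rewrite andbC.
by rewrite split_e0 with_e0 without_e0 -mulrDl addrC subrK mul1r.
Qed.

End IndependentCoins.

Section BipartiteModel.
Variable R : realType.
Variables nL nR : nat.
Variables (wL : 'I_nL -> R) (wR : 'I_nR -> R).
Hypothesis wL_gt0 : forall u, 0 < wL u.
Hypothesis wR_gt0 : forall v, 0 < wR v.

Definition edge_coin (e : 'I_nL * 'I_nR) : R := edge_prob wL wR e.1 e.2.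

Lemma Pr_prob (A : pred (outcome nL nR)) : Pr wL wR A = prob edge_coin A.
Proof. by []. Qed.

Definition edge_intensity (u : 'I_nL) (v : 'I_nR) : R :=
  wL u * wR v / (nR%:R * momR wR 1).

Definition pair_intensity (u1 u2 : 'I_nL) : R :=
  momR wR 2 / momR wR 1 ^+ 2 * (wL u1 * wL u2 / nR%:R).

Lemma momR_ge0 k : 0 <= momR wR k.
Proof.
by apply: divr_ge0 => //; apply: sumr_ge0 => v _; rewrite exprn_ge0 // ltW.
Qed.

Lemma edge_intensity_ge0 u v : 0 <= edge_intensity u v.
Proof.
by apply: divr_ge0; apply: mulr_ge0; rewrite ?momR_ge0 // ltW.
Qed.

Lemma edge_coin_ge0 e : 0 <= edge_coin e.
Proof. by rewrite /edge_coin /edge_prob le_min edge_intensity_ge0 ler01. Qed.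

Lemma edge_coin_le1 e : edge_coin e <= 1.
Proof. by rewrite /edge_coin /edge_prob ge_min lexx orbT. Qed.

Lemma edge_coin_le_intensity u v : edge_coin (u, v) <= edge_intensity u v.
Proof. by rewrite /edge_coin /edge_prob ge_min lexx. Qed.

Lemma sum_edge_intensity (u1 u2 : 'I_nL) :
  \sum_z edge_intensity u1 z * edge_intensity u2 z = pair_intensity u1 u2.
Proof.
case: (posnP nR) => [nR0 | nR_gt0].
  rewrite big1; last by move=> z; have := ltn_ord z; rewrite [X in (_ < X)%N]nR0.
  have nR0_R : nR%:R = 0 :> R by rewrite nR0.
  by rewrite /pair_intensity /momR nR0_R invr0 !mulr0.
set S1 := \sum_(v < nR) wR v ^+ 1.
have S1_gt0 : 0 < S1.
  rewrite /S1 (bigD1 (Ordinal nR_gt0)) //= expr1.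
  by rewrite ltr_wpDr ?wR_gt0 //; apply: sumr_ge0 => v _; rewrite expr1 ltW.
have nR_neq0 : (nR%:R : R) != 0 by rewrite pnatr_eq0 -lt0n.
rewrite /pair_intensity /edge_intensity /momR -/S1.
transitivity (wL u1 * wL u2 / S1 ^+ 2 * \sum_(v < nR) wR v ^+ 2).
  rewrite mulr_sumr; apply: eq_bigr => z _.
  by field; rewrite nR_neq0 lt0r_neq0.
by field; rewrite nR_neq0 lt0r_neq0.
Qed.

Lemma condPr_le_mul (A B : pred (outcome nL nR)) (c : R) :
  0 <= c -> Pr wL wR [pred E | A E && B E] <= c * Pr wL wR B ->
  condPr wL wR A B <= c.
Proof.
move=> c_ge0 joint_le; rewrite /condPr.
have [PB0 | PB_neq0] := eqVneq (Pr wL wR B) 0; first by rewrite PB0 invr0 mulr0.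
have PB_gt0 : 0 < Pr wL wR B.
  by rewrite lt0r PB_neq0 (prob_ge0 edge_coin_ge0 edge_coin_le1).
by rewrite ler_pdivrMr.
Qed.

Variables u1 u2 : 'I_nL.
Hypothesis u1_neq_u2 : u1 != u2.

Definition other_common_nb (z : 'I_nR) (E : outcome nL nR) : bool :=
  [exists z', (z' != z) && ((u1, z') \in E) && ((u2, z') \in E)].

Lemma other_common_nb_indep z a E :
  other_common_nb z (E :\ (a, z)) = other_common_nb z E.
Proof.
apply: eq_existsb => z'; rewrite !in_setD1.
case: (eqVneq z' z) => [-> | z'_neq_z] //=.
have pair_neq b : (b, z') != (a, z) by apply: contra z'_neq_z => /eqP[_ ->].
by rewrite !pair_neq.
Qed.

Lemma other_common_nb_proj_edge z E : other_common_nb z E -> proj_edge E u1 u2.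
Proof.
case/existsP=> z' /andP[/andP[_ h1] h2].
by rewrite /proj_edge u1_neq_u2; apply/existsP; exists z'; rewrite h1 h2.
Qed.

Lemma prob_two_common_at z :
  prob edge_coin [pred E : outcome nL nR |
    ((u1, z) \in E) && ((u2, z) \in E) && other_common_nb z E]
  <= edge_coin (u1, z) * edge_coin (u2, z)
     * Pr wL wR [pred E : outcome nL nR | proj_edge E u1 u2].
Proof.
have pair_neq : (u2, z) != (u1, z) by apply: contra u1_neq_u2 => /eqP[->].
rewrite (@eq_prob _ _ _ _ [pred E : outcome nL nR |
   ((u1, z) \in E) && (((u2, z) \in E) && other_common_nb z E)]); last first.
  by move=> E /=; rewrite andbA.
rewrite (@prob_coin_indep _ _ edge_coin (u1, z)); last first.
  by move=> E; rewrite in_setD1 pair_neq other_common_nb_indep.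
rewrite (@prob_coin_indep _ _ edge_coin (u2, z)); last exact: other_common_nb_indep.
rewrite -mulrA ler_wpM2l ?edge_coin_ge0 // ler_wpM2l ?edge_coin_ge0 //.
by apply: (prob_mono edge_coin_ge0 edge_coin_le1) => E; exact: other_common_nb_proj_edge.
Qed.

(* Union bound over the first common neighbour z. *)
Lemma prob_two_common_and_edge :
  Pr wL wR [pred E : outcome nL nR | (2 <= common_nb E u1 u2)%N && proj_edge E u1 u2]
  <= (\sum_z edge_coin (u1, z) * edge_coin (u2, z))
     * Pr wL wR [pred E : outcome nL nR | proj_edge E u1 u2].
Proof.
rewrite Pr_prob; apply: le_trans.
  apply: (@prob_union_bound _ _ edge_coin edge_coin_ge0 edge_coin_le1 _ _ (fun z =>
    [pred E : outcome nL nR | ((u1, z) \in E) && ((u2, z) \in E) && other_common_nb z E])).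
  move=> E /andP[/card_gt1P[x [y [hx hy x_neq_y]]] _].
  move: hx hy; rewrite !inE => /andP[h1 h2] /andP[h3 h4].
  exists x; rewrite /= h1 h2 /=; apply/existsP; exists y.
  by rewrite h3 h4 eq_sym x_neq_y.
by rewrite mulr_suml; apply: ler_sum => z _; exact: prob_two_common_at.
Qed.

Lemma sum_edge_coin_le :
  \sum_z edge_coin (u1, z) * edge_coin (u2, z) <= pair_intensity u1 u2.
Proof.
rewrite -sum_edge_intensity; apply: ler_sum => z _.
by apply: ler_pM; rewrite ?edge_coin_ge0 ?edge_coin_le_intensity.
Qed.

Lemma condPr_two_common_le :
  condPr wL wR [pred E | (2 <= common_nb E u1 u2)%N] [pred E | proj_edge E u1 u2]
  <= pair_intensity u1 u2.
Proof.
apply: condPr_le_mul.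
  by rewrite -sum_edge_intensity; apply: sumr_ge0 => z _; rewrite mulr_ge0 ?edge_intensity_ge0.
apply: (le_trans prob_two_common_and_edge); apply: ler_wpM2r.
  exact: (prob_ge0 edge_coin_ge0 edge_coin_le1).
exact: sum_edge_coin_le.
Qed.

End BipartiteModel.

Theorem mainTheorem5 (R : realType) (delta : R)
  (nL nR : nat -> nat)
  (wL : forall m, 'I_(nL m) -> R) (wR : forall m, 'I_(nR m) -> R) :
  0 < delta ->
  (* n_L, n_R -> infinity along the sequence of instances *)
  (forall N, exists m0, forall m, (m0 <= m)%N -> (N <= nL m)%N) ->
  (forall N, exists m0, forall m, (m0 <= m)%N -> (N <= nR m)%N) ->
  (* positive weights *)
  (forall m u, 0 < wL m u) -> (forall m v, 0 < wR m v) ->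
  (* Assumption 1 *)
  (forall m u v, wL m u * wR m v / ((nR m)%:R * momR (wR m) 1) <= 1) ->
  (* Assumption 2: max(S_L u S_R) = O(n_R^(1/2 - delta)) *)
  (exists C, exists m0, forall m, (m0 <= m)%N ->
     (forall u, wL m u <= C * ((nR m)%:R `^ (2^-1 - delta))) /\
     (forall v, wR m v <= C * ((nR m)%:R `^ (2^-1 - delta)))) ->
  (* min S_L = Omega(1) *)
  (exists c, 0 < c /\ exists m0, forall m, (m0 <= m)%N -> forall u, c <= wL m u) ->
  (* M_R2 = O(M_R1^2) *)
  (exists C, exists m0, forall m, (m0 <= m)%N ->
     momR (wR m) 2 <= C * (momR (wR m) 1) ^+ 2) ->
  (* M_R4 = O(n_R^(1 - 2 delta)) *)
  (exists C, exists m0, forall m, (m0 <= m)%N ->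
     momR (wR m) 4 <= C * ((nR m)%:R `^ (1 - 2 * delta))) ->
  (* conclusion: Pr[N >= 2 | S_L, S_R, (u1,u2) in E] = O(p_{u1 u2}), uniformly in u1 != u2 *)
  exists C, exists m0, forall m, (m0 <= m)%N ->
    forall u1 u2 : 'I_(nL m), u1 != u2 ->
      condPr (wL m) (wR m)
        [pred Eb | (2 <= common_nb Eb u1 u2)%N]
        [pred Eb | proj_edge Eb u1 u2]
      <= C * (momR (wR m) 2 / (momR (wR m) 1) ^+ 2 * (wL m u1 * wL m u2 / (nR m)%:R)).
Proof.
move=> _ _ _ wL_gt0 wR_gt0 _ _ _ _ _.
exists 1, 0%N => m _ u1 u2 u1_neq_u2; rewrite mul1r.
exact: (condPr_two_common_le (wL_gt0 m) (wR_gt0 m) u1_neq_u2).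
Qed.
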